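(* The polynomials $J$, $\Gamma$ and $B$ are $SL_2(\mathbb{F}_q)$-invariant.
   Context: Let $p>2$ be a prime, $q=p^n$, and $\mathbb{F}$ a field of characteristic $p$ containing $\mathbb{F}_q$. The group $GL_2(\mathbb{F})$ (hence $SL_2(\mathbb{F}_q)$) acts on the right on $\mathbb{F}[a_0,a_1,a_2]$ by algebra automorphisms: for $g=\begin{pmatrix}\alpha&\beta'\\ \gamma'&\delta\end{pmatrix}$, $a_2 g=\alpha^2a_2+2\alpha\beta' a_1+\beta'^2a_0$, $a_1g=\alpha\gamma' a_2+(\alpha\delta+\beta'\gamma')a_1+\beta'\delta a_0$, $a_0g=\gamma'^2a_2+2\gamma'\delta a_1+\delta^2a_0$. Define $\beta=\prod_{c\in\mathbb{F}_q}(a_1+ca_0)$ and for $k\in\mathbb{F}_q$, $\gamma_k=\prod_{c\in\mathbb{F}_q}(a_2+2ca_1+(c^2-k)a_0)$. Let $\mathcal{Q}$ be the set of nonzero quadratic residues in $\mathbb{F}_q$ and $\overline{\mathcal{Q}}$ the set of quadratic nonresidues. Define $\Gamma=\prod_{k\in\overline{\mathcal{Q}}}\gamma_k$, $B=\beta\prod_{k\in\mathcal{Q}}\gamma_k$, $J=a_0\gamma_0$. *)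

From HB Require Import structures.
From mathcomp Require Import all_boot all_order all_algebra all_field.
From mathcomp Require Import mpoly.
Set Implicit Arguments. Unset Strict Implicit. Unset Printing Implicit Defensive.
Import GRing.Theory.
Local Open Scope ring_scope.

(* F_q is modelled as a finite field K (with #|K| = q) embedded in F via a
   ring morphism f : K -> F (necessarily injective). *)
Section Invariants.
Variables (K : finFieldType) (F : fieldType) (f : {rmorphism K -> F}).

Definition a0 : {mpoly F[3]} := 'X_(@Ordinal 3 0 isT).
Definition a1 : {mpoly F[3]} := 'X_(@Ordinal 3 1 isT).
Definition a2 : {mpoly F[3]} := 'X_(@Ordinal 3 2 isT).

Definition act (g : 'M[K]_2) (P : {mpoly F[3]}) : {mpoly F[3]} :=
  let al := f (g 0 0) in let be := f (g 0 1) in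
  let ga := f (g 1 0) in let de := f (g 1 1) in
  P \mPo [tuple (ga ^+ 2)%:MP * a2 + (2 * ga * de)%:MP * a1 + (de ^+ 2)%:MP * a0;
                (al * ga)%:MP * a2 + (al * de + be * ga)%:MP * a1 + (be * de)%:MP * a0;
                (al ^+ 2)%:MP * a2 + (2 * al * be)%:MP * a1 + (be ^+ 2)%:MP * a0].

Definition betaP : {mpoly F[3]} := \prod_(c : K) (a1 + (f c)%:MP * a0).

Definition gammaP (k : K) : {mpoly F[3]} :=
  \prod_(c : K) (a2 + (2 * f c)%:MP * a1 + (f c ^+ 2 - f k)%:MP * a0).

Definition qres (k : K) : bool := (k != 0) && [exists x : K, x ^+ 2 == k].
Definition qnonres (k : K) : bool := (k != 0) && ~~ [exists x : K, x ^+ 2 == k].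

Definition GammaP : {mpoly F[3]} := \prod_(k : K | qnonres k) gammaP k.
Definition BP : {mpoly F[3]} := betaP * \prod_(k : K | qres k) gammaP k.
Definition JP : {mpoly F[3]} := a0 * gammaP 0.

End Invariants.

From HB Require Import structures.
From mathcomp Require Import all_boot all_order all_algebra all_field.
From mathcomp Require Import mpoly.
From mathcomp Require Import ring.
Set Implicit Arguments. Unset Strict Implicit. Unset Printing Implicit Defensive.
Import GRing.Theory.
Local Open Scope ring_scope.

(* Identify the linear form u a2 + 2 v a1 + w a0 with the symmetric matrix
   S = [[u, v], [v, w]].  Then g acts on these forms by the congruence
   S |-> g^T S g, which multiplies the discriminant v^2 - u w by (det g)^2.
   Each of J, Gamma and B is a product, over all nonzero forms up to scalars
   whose discriminant lies in one class ({0}, the nonsquares, the nonzero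
   squares), of a normalised representative.  So for det g = 1 the action of g
   permutes the factors up to scalars, and the invariance amounts to the
   product of these scalars being 1.  This is computed directly from
   Wilson's theorem (the product of the nonzero elements is -1) and from
   Euler's criterion, in the form prod_(k nonsquare) (y - k) = y^((q-1)/2) + 1. *)

Section FiniteField.
Variable K : finFieldType.

Local Notation q := #|K|.

Lemma card_pred_gt0 : (0 < q.-1)%N.
Proof. by rewrite -ltnS prednK ?finNzRing_gt1 // ltnW ?finNzRing_gt1. Qed.

Lemma expf_card_pred (x : K) : x != 0 -> x ^+ q.-1 = 1.
Proof.
move=> x_neq0; apply: (mulfI x_neq0).
by rewrite mulr1 -exprS prednK ?expf_card // ltnW ?finNzRing_gt1.
Qed.

Lemma prod_XsubC_neq0 : \prod_(x : K | x != 0) ('X - x%:P) = 'X^(q.-1) - 1.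
Proof.
apply: (mulfI (x := 'X)); first by rewrite polyX_eq0.
have := finField_genPoly K; rewrite (bigD1 0) //= subr0 => <-.
by rewrite mulrBr mulr1 -exprS prednK // ltnW ?finNzRing_gt1.
Qed.

Lemma prod_neq0 : \prod_(x : K | x != 0) x = -1.
Proof.
have := congr1 (horner^~ 0) prod_XsubC_neq0.
rewrite horner_prod !hornerE expr0n eqn0Ngt card_pred_gt0 /=.
under eq_bigr do rewrite hornerXsubC sub0r.
rewrite prodrN; have -> : #|(fun x : K => x != 0)| = q.-1 by rewrite -(cardC1 0).
by rewrite expf_card_pred ?oppr_eq0 ?oner_eq0 // mul1r sub0r.
Qed.

Lemma card_rootsXn n (c : K) : (0 < n)%N -> (#|[set x : K | x ^+ n == c]| <= n)%N.
Proof.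
move=> n_gt0; have := @max_poly_roots _ ('X^n - c%:P) (enum [set x : K | x ^+ n == c]).
rewrite size_XnsubC // ltnS -cardE; apply.
- by rewrite -size_poly_eq0 size_XnsubC.
- by apply/allP => x; rewrite mem_enum inE /root !hornerE => /eqP ->; rewrite subrr.
- exact: enum_uniq.
Qed.

Lemma exists_sqrM (s k : K) :
  s != 0 -> [exists x, x ^+ 2 == s ^+ 2 * k] = [exists x, x ^+ 2 == k].
Proof.
move=> s_neq0; apply/existsP/existsP => -[x /eqP x2].
  by exists (x / s); rewrite expr_div_n x2 mulrAC mulfV ?mul1r ?expf_neq0.
by exists (s * x); rewrite exprMn x2.
Qed.

Lemma qres_sqrM (s k : K) : s != 0 -> qres (s ^+ 2 * k) = qres k.
Proof. by move=> s_neq0; rewrite /qres mulf_eq0 sqrf_eq0 (negbTE s_neq0) exists_sqrM. Qed.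

Lemma qnonres_sqrM (s k : K) : s != 0 -> qnonres (s ^+ 2 * k) = qnonres k.
Proof. by move=> s_neq0; rewrite /qnonres mulf_eq0 sqrf_eq0 (negbTE s_neq0) exists_sqrM. Qed.

Lemma qres_sqr (x : K) : x != 0 -> qres (x ^+ 2).
Proof. by move=> x_neq0; rewrite /qres sqrf_eq0 x_neq0; apply/existsP; exists x. Qed.

Lemma qnonres_sqr (x : K) : qnonres (x ^+ 2) = false.
Proof. by apply/negbTE; rewrite /qnonres negb_and !negbK; apply/orP; right; apply/existsP; exists x. Qed.

Lemma prod_neq0_const (R : comNzRingType) (x : R) : \prod_(y : K | y != 0) x = x ^+ q.-1.
Proof. by rewrite prodr_const -(cardC1 0). Qed.

Lemma prodr_constT (R : comNzRingType) (x : R) : \prod_(y : K) x = x ^+ q.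
Proof. by rewrite prodr_const. Qed.

Lemma sqr_sub_qnonres_neq0 (k y z : K) :
  qnonres k -> (y != 0) || (z != 0) -> y ^+ 2 - k * z ^+ 2 != 0.
Proof.
case/andP=> k_neq0 k_nsq; have [->|z_neq0] := eqVneq z 0.
  by rewrite orbF expr0n /= mulr0n mulr0 subr0 sqrf_eq0.
move=> _; rewrite subr_eq0; apply: contra k_nsq => /eqP y2.
by apply/existsP; exists (y / z); rewrite expr_div_n y2 mulfK ?expf_neq0.
Qed.

Lemma prod_sqr_sub_scaled (k z : K) : z != 0 ->
  \prod_(y : K) (y ^+ 2 - k * z ^+ 2) = z ^+ 2 * \prod_(y : K) (y ^+ 2 - k).
Proof.
move=> z_neq0; rewrite (reindex_inj (mulfI z_neq0)) /=.
under eq_bigr do rewrite exprMn [k * _]mulrC -mulrBr.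
by rewrite big_split /= prodr_constT exprAC expf_card.
Qed.

Hypothesis card_odd : odd q.

Local Notation m := q./2.

Lemma half_card_double : m.*2 = q.-1.
Proof. exact: odd_halfK. Qed.

Lemma half_card_gt0 : (0 < m)%N.
Proof. by rewrite -double_gt0 half_card_double card_pred_gt0. Qed.

Lemma sqr_expr_half (x : K) : x != 0 -> x ^+ 2 ^+ m = 1.
Proof. by move=> x_neq0; rewrite -exprM mul2n half_card_double expf_card_pred. Qed.

Lemma prod_const_sqr_half (P : pred K) (x : K) : x != 0 -> #|[set k | P k]| = m ->
  \prod_(k | P k) \prod_(y : K) x ^+ 2 = 1.
Proof.
move=> x_neq0 card_P; under eq_bigr do rewrite prodr_constT exprAC expf_card.
by rewrite prodr_const -cardsE card_P sqr_expr_half.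
Qed.

Lemma qres_expr_half (k : K) : qres k -> k ^+ m = 1.
Proof.
case/andP=> k_neq0 /existsP[x /eqP x2k]; rewrite -x2k sqrf_eq0 in k_neq0.
by rewrite -x2k -exprM mul2n half_card_double expf_card_pred.
Qed.

Lemma half_card_le_qres : (m <= #|[set k : K | qres k]|)%N.
Proof.
rewrite -leq_double half_card_double -(cardC1 0) -[X in (X <= _)%N]sum1_card.
rewrite (partition_big (fun x => x ^+ 2) (@qres K)) => [|x /[!inE] x_neq0]; last first.
  exact: qres_sqr.
rewrite -muln2 -sum_nat_cond_const leq_sum // => k _.
rewrite sum1dep_card; apply: leq_trans (card_rootsXn k (isT : 0 < 2)%N).
by apply: subset_leq_card; apply/subsetP => x; rewrite !inE => /andP[].
Qed.

Lemma qres_exprE : [set k : K | qres k] = [set x : K | x ^+ m == 1].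
Proof.
apply/eqP; rewrite eqEcard; apply/andP; split.
  by apply/subsetP => k; rewrite !inE => /qres_expr_half ->.
exact: leq_trans (card_rootsXn 1 half_card_gt0) half_card_le_qres.
Qed.

Lemma card_qres : #|[set k : K | qres k]| = m.
Proof.
apply/eqP; rewrite eqn_leq half_card_le_qres andbT qres_exprE.
exact: card_rootsXn half_card_gt0.
Qed.

Lemma qnonres_expr_half (k : K) : qnonres k -> k ^+ m = -1.
Proof.
case/andP=> k_neq0 k_nsq.
have /eqP : (k ^+ m - 1) * (k ^+ m + 1) = 0.
  by rewrite -subr_sqr -exprM muln2 half_card_double expf_card_pred // expr1n subrr.
rewrite mulf_eq0 subr_eq0 addr_eq0 => /orP[k_res | /eqP //].
have : k \in [set k | qres k] by rewrite qres_exprE inE.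
by rewrite inE /qres k_neq0 (negbTE k_nsq).
Qed.

Lemma card_qnonres : #|[set k : K | qnonres k]| = m.
Proof.
have -> : [set k : K | qnonres k] = [set~ (0 : K)] :\: [set k : K | qres k].
  by apply/setP => k; rewrite !inE /qnonres /qres; case: (k != 0); case: [exists _, _].
rewrite cardsD (setIidPr _) ?card_qres ?cardsC1 -?half_card_double -?addnn ?addnK //.
by apply/subsetP => k; rewrite !inE => /andP[].
Qed.

Lemma prod_sub_qnonres (y : K) : \prod_(k | qnonres k) (y - k) = y ^+ m + 1.
Proof.
have roots : all (root ('X^m + 1%:P)) (enum [set k : K | qnonres k]).
  apply/allP => k; rewrite mem_enum inE => /qnonres_expr_half k_half.
  by rewrite /root !hornerE k_half addNr.
have := @all_roots_prod_XsubC K ('X^m + 1%:P) (enum [set k : K | qnonres k]).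
rewrite size_XnaddC ?half_card_gt0 // -cardE card_qnonres uniq_rootsE enum_uniq.
rewrite lead_coefXnaddC ?half_card_gt0 // scale1r big_enum.
move=> /(_ erefl roots isT) /(congr1 (horner^~ y)); rewrite horner_prod !hornerE => ->.
by apply: eq_big => [k|k _]; rewrite ?inE ?hornerXsubC.
Qed.

Hypothesis two_neq0 : (2 : K) != 0.

Lemma oppr_eq_self (t : K) : (- t == t) = (t == 0).
Proof. by rewrite -subr_eq0 -opprD oppr_eq0 -mulr2n -mulr_natl mulf_eq0 (negbTE two_neq0). Qed.

Lemma prod_sqr_sub_qnonres : \prod_(y : K) \prod_(k | qnonres k) (y ^+ 2 - k) = 1.
Proof.
under eq_bigr do rewrite prod_sub_qnonres -exprM mul2n half_card_double.
rewrite (bigD1 0) //= expr0n eqn0Ngt card_pred_gt0 add0r mul1r.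
under eq_bigr => y y_neq0 do rewrite expf_card_pred //.
by rewrite prod_neq0_const expf_card_pred.
Qed.

Lemma prod_sub_neq (t : K) : \prod_(y | y != t) (y - t) = -1.
Proof.
rewrite (reindex_inj (addIr t)) /= -prod_neq0.
by apply: eq_big => [y|y _]; rewrite ?addrK // -subr_eq0 addrK.
Qed.

Lemma prod_sqr_sub_punctured (t : K) : t != 0 ->
  \prod_(y | (y != t) && (y != - t)) (y ^+ 2 - t ^+ 2) = - ((2 * t) ^+ 2)^-1.
Proof.
move=> t_neq0; have tt_neq0 : t + t != 0 by rewrite -mulr2n -mulr_natl mulf_neq0.
have Nt_neq_t : - t != t by rewrite oppr_eq_self.
have X_eq : \prod_(y | (y != t) && (y != - t)) (y - t) = (t + t)^-1.
  have := prod_sub_neq t; rewrite (bigD1 (- t)) //= -opprD mulNr => /eqP.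
  by rewrite eqr_opp => /eqP XE; apply: (mulfI tt_neq0); rewrite mulfV.
have Y_eq : \prod_(y | (y != - t) && (y != t)) (y + t) = - (t + t)^-1.
  have := prod_sub_neq (- t); rewrite (bigD1 t) 1?eq_sym //= opprK => YE.
  by apply: (mulfI tt_neq0); rewrite mulrN mulfV.
under eq_bigr do rewrite subr_sqr.
rewrite big_split /= X_eq (eq_bigl _ _ (fun y => andbC _ _)) Y_eq.
by rewrite mulrN -invfM; congr (- _^-1); ring.
Qed.

Lemma prod_affine (R : comNzRingType) (G : K -> R) (a c : K) : c != 0 ->
  \prod_(x : K) G (a + x * c) = \prod_(y : K) G y.
Proof.
by move=> c_neq0; rewrite [RHS](reindex_inj (h := fun x => a + x * c)) // => x y /addrI/(mulIf c_neq0).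
Qed.

End FiniteField.

Section SymmetricForms.
Variable R : comNzRingType.
Implicit Types (a b c d s : R) (S : R * R * R).

(* (u, v, w) stands for [[u, v], [v, w]], and symcong a b c d S is g^T S g
   for g = [[a, b], [c, d]]. *)
Definition symcong a b c d S : R * R * R :=
  let: (u, v, w) := S in
  (u * a ^+ 2 + 2 * v * a * c + w * c ^+ 2,
   u * a * b + v * (a * d + b * c) + w * c * d,
   u * b ^+ 2 + 2 * v * b * d + w * d ^+ 2).

Definition symscale s S : R * R * R := let: (u, v, w) := S in (s * u, s * v, s * w).

Definition symdisc S : R := let: (u, v, w) := S in v ^+ 2 - u * w.

Lemma symdiscE S : symdisc S = S.1.2 ^+ 2 - S.1.1 * S.2.
Proof. by case: S => [[]]. Qed.

Lemma symscaleA s t S : symscale s (symscale t S) = symscale (s * t) S.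
Proof. by case: S => [[u v] w]; rewrite /= !mulrA. Qed.

Lemma symcongZ a b c d s S :
  symcong a b c d (symscale s S) = symscale s (symcong a b c d S).
Proof. by case: S => [[u v] w]; congr (_, _, _); ring. Qed.

Lemma symcongK a b c d S :
  symcong d (- b) (- c) a (symcong a b c d S) = symscale ((a * d - b * c) ^+ 2) S.
Proof. by case: S => [[u v] w]; congr (_, _, _); ring. Qed.

Lemma symdisc_cong a b c d S :
  symdisc (symcong a b c d S) = (a * d - b * c) ^+ 2 * symdisc S.
Proof. by case: S => [[u v] w] /=; ring. Qed.

Lemma symdiscZ s S : symdisc (symscale s S) = s ^+ 2 * symdisc S.
Proof. by case: S => [[u v] w] /=; ring. Qed.

Lemma symcong_inj a b c d : a * d - b * c = 1 -> injective (symcong a b c d).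
Proof.
move=> det1 S T /(congr1 (symcong d (- b) (- c) a)).
by rewrite !symcongK det1 expr1n; case: S T => [[? ?] ?] [[? ?] ?] /=; rewrite !mul1r.
Qed.

End SymmetricForms.

(* The points of the projective plane of forms (nonzero forms up to scalars):
   the chart u = 1, indexed by discriminant and middle coefficient, then the
   points with u = 0 and v <> 0, then the point (0, 0, 1); see line_rep. *)
Definition line (K : Type) := ((K * K) + (K + unit))%type.

Section Lines.
Variable K : fieldType.
Hypothesis two_neq0 : (2 : K) != 0.
Implicit Types (i j : line K) (S : K * K * K).

Definition line_rep i : K * K * K :=
  match i with
  | inl (k, x) => (1, x, x ^+ 2 - k)
  | inr (inl z) => (0, 2^-1, z)
  | inr (inr _) => (0, 0, 1)
  end.

Definition line_disc i : K :=
  match i with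
  | inl (k, _) => k
  | inr (inl _) => 2^-1 ^+ 2
  | inr (inr _) => 0
  end.

Definition line_of S : line K :=
  let: (u, v, w) := S in
  if u != 0 then inl ((v ^+ 2 - u * w) / u ^+ 2, v / u)
  else if v != 0 then inr (inl (w / (2 * v))) else inr (inr tt).

Definition line_scale S : K :=
  let: (u, v, w) := S in if u != 0 then u else if v != 0 then 2 * v else w.

Lemma symdisc_rep i : symdisc (line_rep i) = line_disc i.
Proof. by case: i => [[k x]|[z|[]]] /=; ring. Qed.

Lemma line_ofK S : symscale (line_scale S) (line_rep (line_of S)) = S.
Proof.
case: S => [[u v] w] /=; have [u0|u_neq0] := eqVneq u 0 => /=.
  have [v0|v_neq0] := eqVneq v 0 => /=; first by rewrite !mulr0 mulr1 u0 v0.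
  by rewrite u0 mulr0; congr (_, _, _); field; rewrite ?v_neq0.
by congr (_, _, _); field; rewrite ?u_neq0.
Qed.

Lemma line_scale_eq0 S : (line_scale S == 0) = (S == (0, 0, 0)).
Proof.
case: S => [[u v] w] /=; rewrite !xpair_eqE.
have [->|u_neq0] /= := eqVneq u 0; last by rewrite (negbTE u_neq0).
have [->|v_neq0] //= := eqVneq v 0.
by rewrite mulf_eq0 (negbTE two_neq0) (negbTE v_neq0).
Qed.

Lemma line_rep_projinj i j s : line_rep i = symscale s (line_rep j) -> i = j.
Proof.
have two_inv_neq0 : 2^-1 != 0 :> K by rewrite invr_eq0.
case: i j => [[k x]|[z|[]]] [[k' x']|[z'|[]]] /= [] //; rewrite ?mulr0 ?mulr1.
- by move=> <-; rewrite !mul1r => <- /addrI/oppr_inj ->.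
- by move=> /eqP; rewrite oner_eq0.
- by move=> /eqP; rewrite oner_eq0.
- by move=> <-; rewrite mul0r => /eqP; rewrite (negbTE two_inv_neq0).
- move=> _ s_half; have -> : s = 1 by apply: (mulIf two_inv_neq0); rewrite mul1r -s_half.
  by rewrite mul1r => ->.
- by move=> _ /eqP; rewrite (negbTE two_inv_neq0).
- by move=> <-; rewrite !mul0r => _ /eqP; rewrite oner_eq0.
- move=> _ /esym/eqP; rewrite mulf_eq0 (negbTE two_inv_neq0) orbF => /eqP ->.
  by rewrite mul0r => /eqP; rewrite oner_eq0.
Qed.

Lemma line_scaleE S :
  line_scale S = if S.1.1 != 0 then S.1.1 else if S.1.2 != 0 then 2 * S.1.2 else S.2.
Proof. by case: S => [[]]. Qed.

Lemma line_rep_neq0 i : line_rep i != (0, 0, 0).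
Proof.
by case: i => [[k x]|[z|[]]]; rewrite !xpair_eqE ?oner_eq0 ?invr_eq0 ?(negbTE two_neq0) ?andbF.
Qed.

Section Congruence.
Variables a b c d : K.
Hypothesis det1 : a * d - b * c = 1.
Local Notation cong := (symcong a b c d).

Definition line_move i : line K := line_of (cong (line_rep i)).
Definition line_mult i : K := line_scale (cong (line_rep i)).

Lemma symcong_rep i : cong (line_rep i) = symscale (line_mult i) (line_rep (line_move i)).
Proof. by rewrite line_ofK. Qed.

Lemma line_mult_neq0 i : line_mult i != 0.
Proof.
rewrite line_scale_eq0; apply: contra (line_rep_neq0 i) => /eqP cong0; apply/eqP.
by apply: (symcong_inj det1); rewrite cong0 /=; congr (_, _, _); ring.
Qed.

Lemma line_move_inj : injective line_move.
Proof.
move=> i j move_ij; apply: (@line_rep_projinj _ _ (line_mult i / line_mult j)).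
apply: (symcong_inj det1); rewrite symcongZ !symcong_rep move_ij symscaleA.
by rewrite divfK ?line_mult_neq0.
Qed.

Lemma line_disc_move i : line_disc i = line_mult i ^+ 2 * line_disc (line_move i).
Proof. by rewrite -!symdisc_rep -symdiscZ -symcong_rep symdisc_cong det1 expr1n mul1r. Qed.

Lemma line_move_disc (P : pred K) : (forall s k, s != 0 -> P (s ^+ 2 * k) = P k) ->
  forall i, P (line_disc (line_move i)) = P (line_disc i).
Proof. by move=> P_sqr i; rewrite [in RHS]line_disc_move P_sqr ?line_mult_neq0. Qed.

Lemma det1_a_neq0 : c = 0 -> a != 0.
Proof.
move=> c0; apply/eqP => a0; move: det1.
by rewrite a0 c0 mul0r mulr0 subrr => /eqP; rewrite eq_sym oner_eq0.
Qed.

Lemma line_mult_inl k x : line_mult (inl (k, x)) =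
  if (a + x * c) ^+ 2 - k * c ^+ 2 != 0 then (a + x * c) ^+ 2 - k * c ^+ 2
  else if a + x * c != 0 then - (2 * (a + x * c)) / c else c ^- 2.
Proof.
rewrite /line_mult line_scaleE; set T := cong _; set y := a + x * c.
have u_eq : T.1.1 = y ^+ 2 - k * c ^+ 2 by rewrite /T /y /=; ring.
have v_eq : c * T.1.2 = d * T.1.1 - y * (a * d - b * c) by rewrite /T /y /=; ring.
have w_eq : c ^+ 2 * T.2 = (d * y - (a * d - b * c)) ^+ 2 - d ^+ 2 * (k * c ^+ 2).
  by rewrite /T /y /=; ring.
rewrite det1 mulr1 in v_eq; rewrite det1 in w_eq.
rewrite u_eq; case: ifP => // /negbFE; rewrite subr_eq0 eq_sym => /eqP kc2.
have c_neq0 : c != 0.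
  apply/eqP => c0; move: kc2; rewrite /y c0 mulr0 addr0 expr0n /= mulr0n mulr0 => /esym/eqP.
  by rewrite sqrf_eq0 (negbTE (det1_a_neq0 c0)).
rewrite (canRL (mulKf c_neq0) v_eq) u_eq kc2 subrr mulr0 sub0r.
rewrite mulf_eq0 invr_eq0 oppr_eq0 (negbTE c_neq0) orFb.
case: ifP => [_|/negbFE/eqP y0]; first ring.
apply: (mulfI (expf_neq0 2 c_neq0)).
by rewrite w_eq kc2 y0 mulfV ?expf_neq0 //; ring.
Qed.

Lemma line_mult_inl_c0 k x : c = 0 -> line_mult (inl (k, x)) = a ^+ 2.
Proof.
move=> c0; rewrite line_mult_inl c0 mulr0 addr0 expr0n /= mulr0n mulr0 subr0.
by rewrite sqrf_eq0 det1_a_neq0.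
Qed.

Lemma line_mult_inr_inl z : line_mult (inr (inl z)) =
  if c * (a + z * c) != 0 then c * (a + z * c) else 2 * d * (a + z * c) - 1.
Proof.
rewrite /line_mult line_scaleE; set T := cong _; set y := a + z * c.
have u_eq : T.1.1 = c * y by rewrite /T /y /=; field.
have v_eq : 2 * T.1.2 = 2 * d * y - (a * d - b * c) by rewrite /T /y /=; field.
rewrite u_eq det1 in v_eq *; case: ifP => // /negbFE/eqP cy0.
have := symdisc_cong a b c d (line_rep (inr (inl z))).
rewrite -/T det1 expr1n mul1r symdisc_rep symdiscE u_eq cy0 mul0r subr0 => v2.
by rewrite -sqrf_eq0 v2 sqrf_eq0 invr_eq0 (negbTE two_neq0).
Qed.

Lemma line_mult_inr_inr : line_mult (inr (inr tt)) = if c != 0 then c ^+ 2 else d ^+ 2.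
Proof.
rewrite /line_mult (_ : cong _ = (c ^+ 2, c * d, d ^+ 2)) /=; last by congr (_, _, _); ring.
by rewrite sqrf_eq0; have [->|//] := eqVneq c 0; rewrite mul0r eqxx.
Qed.

End Congruence.

End Lines.

Lemma prod_line_disc (K : finFieldType) (R : comNzRingType) (P : pred K) (G : line K -> R) :
  \prod_(i | P (line_disc i)) G i =
  \prod_(k | P k) \prod_(x : K) G (inl (k, x)) *
  ((if P (2^-1 ^+ 2) then \prod_(z : K) G (inr (inl z)) else 1) *
   (if P 0 then G (inr (inr tt)) else 1)).
Proof.
rewrite !big_sumType pair_big_dep /=; congr (_ * (_ * _)).
- by apply: eq_big => [[k x]|[k x] _]; rewrite ?andbT.
- by case: (P _) => //; rewrite big_pred0.
- by case: (P 0); [rewrite (big_pred1 tt) // => -[] | rewrite big_pred0].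
Qed.

Section Multipliers.
Variable K : finFieldType.
Hypotheses (card_odd : odd #|K|) (two_neq0 : (2 : K) != 0).
Variables a b c d : K.
Hypothesis det1 : a * d - b * c = 1.
Local Notation mult := (line_mult a b c d).
Local Notation q := #|K|.
Local Notation m := q./2.

Lemma prod_mult_disc0 : \prod_(i | line_disc i == 0) mult i = 1.
Proof.
rewrite (prod_line_disc (fun k => k == 0)) /= big_pred1_eq sqrf_eq0 invr_eq0.
rewrite (negbTE two_neq0) eqxx mul1r line_mult_inr_inr.
have [c0|c_neq0] /= := eqVneq c 0.
  under eq_bigr do rewrite line_mult_inl_c0 //.
  move: det1; rewrite c0 mulr0 subr0 => ad1.
  by rewrite prodr_constT exprAC expf_card -exprMn ad1 expr1n.
pose G y := if y != 0 then y ^+ 2 else c ^- 2.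
rewrite (eq_bigr (fun x => G (a + x * c))) => [|x _]; last first.
  by rewrite line_mult_inl // mul0r subr0 sqrf_eq0 /G; case: ifP => // ->.
rewrite (prod_affine G) // (bigD1 0) //= {1}/G eqxx /=.
under eq_bigr => y y_neq0 do rewrite /G y_neq0.
by rewrite prodrXl prod_neq0 sqrrN expr1n mulr1 mulVf ?expf_neq0.
Qed.

Lemma prod_mult_qnonres : \prod_(i | qnonres (line_disc i)) mult i = 1.
Proof.
rewrite (prod_line_disc (@qnonres K)) qnonres_sqr (_ : qnonres 0 = false) ?mulr1; last first.
  by rewrite /qnonres eqxx.
have [c0|c_neq0] := eqVneq c 0.
  under eq_bigr do under eq_bigr do rewrite line_mult_inl_c0 //.
  by apply: (prod_const_sqr_half card_odd (det1_a_neq0 det1 c0)); apply: card_qnonres.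
rewrite (eq_bigr (fun k => c ^+ 2 * \prod_(y : K) (y ^+ 2 - k))) => [|k k_nsq].
  rewrite big_split /= prodr_const -cardsE (card_qnonres card_odd) (sqr_expr_half card_odd) // mul1r.
  by rewrite exchange_big (prod_sqr_sub_qnonres card_odd two_neq0).
under eq_bigr do rewrite line_mult_inl // (sqr_sub_qnonres_neq0 k_nsq) ?c_neq0 ?orbT //.
by rewrite (prod_affine (fun y => y ^+ 2 - k * c ^+ 2) a c_neq0) prod_sqr_sub_scaled.
Qed.

Lemma prod_mult_inl_qres k : c != 0 -> qres k -> \prod_(x : K) mult (inl (k, x)) = c ^- 2.
Proof.
move=> c_neq0 /andP[k_neq0 /existsP[t /eqP t2]]; rewrite -t2 sqrf_eq0 in k_neq0.
pose T := t * c; have T_neq0 : T != 0 by rewrite mulf_neq0.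
have kc2 : k * c ^+ 2 = T ^+ 2 by rewrite exprMn t2.
under eq_bigr do rewrite line_mult_inl // kc2.
pose H y := if y ^+ 2 - T ^+ 2 != 0 then y ^+ 2 - T ^+ 2
            else if y != 0 then - (2 * y) / c else c ^- 2.
rewrite (prod_affine H) // (bigD1 T) // (bigD1 (- T)) /=; last by rewrite oppr_eq_self.
rewrite {1 2}/H subrr eqxx sqrrN subrr eqxx /= T_neq0 oppr_eq0 T_neq0.
under eq_bigr => y /andP[yT yNT] do
  rewrite /H subr_sqr mulf_eq0 !subr_eq0 addr_eq0 (negbTE yT) (negbTE yNT) /= -subr_sqr.
rewrite prod_sqr_sub_punctured // /T; field.
by rewrite c_neq0 k_neq0 two_neq0.
Qed.

Lemma prod_mult_inr_inl : \prod_(z : K) mult (inr (inl z)) = 1.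
Proof.
under eq_bigr do rewrite line_mult_inr_inl //.
have [c0|c_neq0] := eqVneq c 0.
  apply: big1 => z _; rewrite c0 mul0r eqxx /=.
  have ad1 : a * d = 1 by move: det1; rewrite c0 mulr0 subr0.
  by rewrite mulr0 addr0 -mulrA [d * a]mulrC ad1; ring.
pose G y := if c * y != 0 then c * y else 2 * d * y - 1.
rewrite (prod_affine G) // (bigD1 0) //= {1}/G mulr0 eqxx /= mulr0 sub0r.
under eq_bigr => y y_neq0 do rewrite /G mulf_neq0 //.
by rewrite big_split /= prod_neq0_const expf_card_pred // prod_neq0 mul1r mulrNN mulr1.
Qed.

Lemma prod_mult_qres : \prod_(i | qres (line_disc i)) mult i = 1.
Proof.
rewrite (prod_line_disc (@qres K)) qres_sqr ?invr_eq0 // prod_mult_inr_inl.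
have -> : qres (0 : K) = false by rewrite /qres eqxx.
rewrite !mulr1.
have [c0|c_neq0] := eqVneq c 0.
  under eq_bigr do under eq_bigr do rewrite line_mult_inl_c0 //.
  by apply: (prod_const_sqr_half card_odd (det1_a_neq0 det1 c0)); apply: card_qres.
rewrite (eq_bigr _ (fun k => prod_mult_inl_qres c_neq0)) prodr_const -cardsE.
by rewrite (card_qres card_odd) -exprVn (sqr_expr_half card_odd) ?invr_eq0.
Qed.

End Multipliers.

Lemma det_mx22 (R : comNzRingType) (g : 'M[R]_2) :
  \det g = g 0 0 * g 1 1 - g 0 1 * g 1 0.
Proof.
rewrite (expand_det_row _ 0) !big_ord_recl big_ord0 addr0 /cofactor !det_mx11 !mxE /=.
rewrite add0n expr0 mul1r /= expr1 mulN1r mulrN.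
by congr (g _ _ * g _ _ - g _ _ * g _ _); apply: val_inj.
Qed.

Section Forms.
Variables (K : finFieldType) (F : fieldType) (f : {rmorphism K -> F}).
Hypothesis two_neq0 : (2 : K) != 0.

Definition form (S : K * K * K) : {mpoly F[3]} :=
  let: (u, v, w) := S in (f u)%:MP * a2 F + (2 * f v)%:MP * a1 F + (f w)%:MP * a0 F.

Lemma act_form (g : 'M[K]_2) S :
  act f g (form S) = form (symcong (g 0 0) (g 0 1) (g 1 0) (g 1 1) S).
Proof.
case: S => [[u v] w].
have compM (t : 3.-tuple {mpoly F[3]}) (p q : {mpoly F[3]}) :
  (p * q) \mPo t = (p \mPo t) * (q \mPo t) by rewrite rmorphM.
rewrite /act /form /a0 /a1 /a2 /= !comp_mpolyD !compM !comp_mpolyC !comp_mpolyXU /=.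
do ![rewrite rmorphD | rewrite rmorphM | rewrite rmorphXn | rewrite rmorph_nat].
ring.
Qed.

Lemma form_scale s S : form (symscale s S) = (f s)%:MP * form S.
Proof.
case: S => [[u v] w] /=.
do ![rewrite rmorphD | rewrite rmorphM | rewrite rmorphXn | rewrite rmorph_nat].
ring.
Qed.

Lemma act_prod_disc (g : 'M[K]_2) (P : pred K) :
  g 0 0 * g 1 1 - g 0 1 * g 1 0 = 1 ->
  (forall s k, s != 0 -> P (s ^+ 2 * k) = P k) ->
  act f g (\prod_(i | P (line_disc i)) form (line_rep i)) =
  (f (\prod_(i | P (line_disc i)) line_mult (g 0 0) (g 0 1) (g 1 0) (g 1 1) i))%:MP *
  \prod_(i | P (line_disc i)) form (line_rep i).
Proof.
move=> det1 P_sqr.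
have -> : act f g (\prod_(i | P (line_disc i)) form (line_rep i)) =
    \prod_(i | P (line_disc i)) act f g (form (line_rep i)) by exact: rmorph_prod.
under eq_bigr do rewrite act_form symcong_rep // form_scale.
rewrite big_split /= -!rmorph_prod; congr (_ * _).
rewrite [RHS](reindex_inj (line_move_inj two_neq0 det1)) /=.
by apply: eq_bigl => i; rewrite line_move_disc.
Qed.

Lemma form_rep_inl k x :
  form (line_rep (inl (k, x))) = a2 F + (2 * f x)%:MP * a1 F + (f x ^+ 2 - f k)%:MP * a0 F.
Proof. by rewrite /= rmorph1 mul1r rmorphB rmorphXn. Qed.

Lemma form_rep_inr_inl z : form (line_rep (inr (inl z))) = a1 F + (f z)%:MP * a0 F.
Proof.
by rewrite /= rmorph0 mul0r add0r -(rmorph_nat f 2) -rmorphM mulfV // rmorph1 mul1r.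
Qed.

Lemma form_rep_inr_inr : form (line_rep (inr (inr tt))) = a0 F.
Proof. by rewrite /= !rmorph0 rmorph1 mulr0 !mul0r !add0r mul1r. Qed.

Lemma JP_lines : JP f = \prod_(i | line_disc i == 0) form (line_rep i).
Proof.
rewrite (prod_line_disc (fun k => k == 0)); cbv beta.
rewrite big_pred1_eq sqrf_eq0 invr_eq0 (negbTE two_neq0) eqxx mul1r form_rep_inr_inr /JP /gammaP mulrC.
by congr (_ * _); apply: eq_bigr => x _; rewrite form_rep_inl.
Qed.

Lemma GammaP_lines : GammaP f = \prod_(i | qnonres (line_disc i)) form (line_rep i).
Proof.
rewrite (prod_line_disc (@qnonres K)) qnonres_sqr (_ : qnonres 0 = false) ?mulr1; last first.
  by rewrite /qnonres eqxx.
by apply: eq_bigr => k _; apply: eq_bigr => x _; rewrite form_rep_inl.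
Qed.

Lemma BP_lines : BP f = \prod_(i | qres (line_disc i)) form (line_rep i).
Proof.
rewrite (prod_line_disc (@qres K)) qres_sqr ?invr_eq0 // (_ : qres 0 = false) ?mulr1; last first.
  by rewrite /qres eqxx.
rewrite /BP mulrC; congr (_ * _).
  by apply: eq_bigr => k _; apply: eq_bigr => x _; rewrite form_rep_inl.
by apply: eq_bigr => z _; rewrite form_rep_inr_inl.
Qed.

End Forms.

Theorem lemma3p1 (p n : nat) (K : finFieldType) (F : fieldType)
  (f : {rmorphism K -> F}) :
  prime p -> (2 < p)%N -> p \in [pchar K] -> #|K| = (p ^ n)%N ->
  forall g : 'M[K]_2, \det g = 1 ->
    [/\ act f g (JP f) = JP f, act f g (GammaP f) = GammaP f
      & act f g (BP f) = BP f].
Proof.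
move=> p_prime p_gt2 p_char card_K g det_g.
have two_neq0 : (2 : K) != 0.
  apply: contraTneq p_gt2 => two0; rewrite -leqNgt.
  by apply: dvdn_leq => //; rewrite (dvdn_pcharf p_char) two0.
have card_odd : odd #|K|.
  by rewrite card_K oddX; case: (even_prime p_prime) p_gt2 => [->|->]; rewrite ?orbT.
have det1 : g 0 0 * g 1 1 - g 0 1 * g 1 0 = 1 by rewrite -det_mx22.
have eq0_sqrM (s k : K) : s != 0 -> (s ^+ 2 * k == 0) = (k == 0).
  by move=> s_neq0; rewrite mulf_eq0 sqrf_eq0 (negbTE s_neq0).
split.
- rewrite JP_lines // (act_prod_disc f two_neq0 (P := fun k => k == 0) det1 eq0_sqrM).
  by rewrite (prod_mult_disc0 two_neq0 det1) rmorph1 mul1r.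
- rewrite GammaP_lines // (act_prod_disc f two_neq0 det1 (@qnonres_sqrM K)).
  by rewrite (prod_mult_qnonres card_odd two_neq0 det1) rmorph1 mul1r.
- rewrite BP_lines // (act_prod_disc f two_neq0 det1 (@qres_sqrM K)).
  by rewrite (prod_mult_qres card_odd two_neq0 det1) rmorph1 mul1r.
Qed.
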